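(* Let $\tilde L$ be a minimum-size counterexample. Then there are no elements $m,j\in\tilde L$ with $m$ meet-irreducible, $j$ join-irreducible, and $m<j$.
   Context: For a poset $P$, $x$ upper covers $y$ (and $y$ lower covers $x$) if $y<x$ with nothing strictly between. Join-irreducible: upper covers exactly one element; meet-irreducible: lower covers exactly one element. For $x\in P$, ${\uparrow}x=\{y: x\le y\}$. A counterexample is a finite lattice $L$ with $|L|>1$ in which every join-irreducible $j$ satisfies $|{\uparrow}j|>|L|/2$; a minimum-size counterexample is a counterexample $\tilde L$ such that no counterexample has fewer elements. *)

From HB Require Import structures.
From mathcomp Require Import all_boot all_order.
Set Implicit Arguments. Unset Strict Implicit. Unset Printing Implicit Defensive.
Import Order.TTheory.
Local Open Scope order_scope.

Definition covers {d} {P : finPOrderType d} (x y : P) : bool :=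
  (y < x) && [forall z : P, ~~ ((y < z) && (z < x))].

Definition join_irr {d} {P : finPOrderType d} (j : P) : bool :=
  #|[set y : P | covers j y]| == 1%N.

Definition meet_irr {d} {P : finPOrderType d} (m : P) : bool :=
  #|[set y : P | covers y m]| == 1%N.

Definition upset {d} {P : finPOrderType d} (x : P) : {set P} :=
  [set y : P | x <= y].

(* counterexample: |L| > 1 and every join-irreducible j has |up j| > |L|/2,
   written without division as 2 * |up j| > |L|. *)
Definition counterexample {d} (L : finLatticeType d) : Prop :=
  (1 < #|L|)%N /\ forall j : L, join_irr j -> (#|L| < 2 * #|upset j|)%N.

Definition min_counterexample {d} (L : finLatticeType d) : Prop :=
  counterexample L /\
  forall (d' : Order.disp_t) (L' : finLatticeType d'),
    counterexample L' -> (#|L| <= #|L'|)%N.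

From HB Require Import structures.
From mathcomp Require Import all_boot all_order zify.
Set Implicit Arguments. Unset Strict Implicit. Unset Printing Implicit Defensive.
Import Order.TTheory.
Local Open Scope order_scope.

(* A meet-irreducible m has a unique upper cover m*, and every z > m lies above
   m*.  Hence deleting m from L leaves a lattice: a meet that was m becomes
   impossible, and a join that was m is replaced by m*.  Deleting m changes
   neither the covering relation nor the up-sets of the elements x that are
   not below m and differ from m*, so those keep their join-irreducibility and
   their up-set sizes, while every other element lies below the
   join-irreducible j > m, whose up-set avoids m.  Thus L minus m is a smaller
   counterexample. *)

Section Covers.
Variables (d : Order.disp_t) (P : finPOrderType d).

Lemma card_strict_downset_lt (w c : P) :
  w < c -> (#|[set v : P | (v < w)%O]| < #|[set v : P | (v < c)%O]|)%N.
Proof.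
move=> wc; apply: proper_card; apply/properP; split.
  by apply/subsetP => v; rewrite !inE => vw; exact: lt_trans vw wc.
by exists w; rewrite !inE ?ltxx.
Qed.

Lemma exists_cover_le (y z : P) : y < z -> exists2 c, covers c y & c <= z.
Proof.
move=> yz.
have yzz : (y < z) && (z <= z) by rewrite yz lexx.
case: (@arg_minnP _ z (fun c => (y < c) && (c <= z))
         (fun c => #|[set v : P | v < c]|) yzz) => c /andP [yc cz] cmin.
exists c => //; rewrite /covers yc; apply/forallP => w; apply/negP => /andP [yw wc].
have := cmin w; rewrite yw (le_trans (ltW wc) cz) => /(_ isT).
by rewrite leqNgt card_strict_downset_lt.
Qed.

Lemma meet_irr_upper_cover (m : P) :
  meet_irr m -> exists2 ms, m < ms & forall z, m < z -> ms <= z.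
Proof.
case/cards1P => ms Ems.
have covers_m c : covers c m -> c = ms.
  by move=> cm; apply/set1P; rewrite -Ems inE.
exists ms; first by have /andP [] : covers ms m by move: (set11 ms); rewrite -Ems inE.
by move=> z /exists_cover_le [c /covers_m <-].
Qed.

End Covers.

Section DeleteMeetIrreducible.
Variables (d : Order.disp_t) (L : finLatticeType d) (m ms : L).
Hypothesis m_lt_ms : m < ms.
Hypothesis ms_le : forall z, m < z -> ms <= z.

Definition Ldel := {x : L | x != m}.
HB.instance Definition _ := Finite.on Ldel.
HB.instance Definition _ :=
  [isSub for (@sval L (fun x => x != m) : Ldel -> L)].
HB.instance Definition _ := [SubChoice_isSubPOrder of Ldel by <: with d].

Lemma leLdelE (x y : Ldel) : (x <= y) = (val x <= val y). Proof. by []. Qed.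
Lemma ltLdelE (x y : Ldel) : (x < y) = (val x < val y). Proof. by []. Qed.

Lemma card_Ldel : #|{: Ldel}| = #|L|.-1.
Proof. by rewrite card_sig cardC1. Qed.

Definition msdel : Ldel := exist _ ms (negbT (gt_eqF m_lt_ms)).
Definition meetdel (x y : Ldel) : Ldel := odflt msdel (insub (val x `&` val y)).
Definition joindel (x y : Ldel) : Ldel := odflt msdel (insub (val x `|` val y)).

Lemma lt_m_of_le_m (x : Ldel) : m <= val x -> m < val x.
Proof. by rewrite lt_def (valP x). Qed.

Lemma lexIdel (x y z : Ldel) : (x <= meetdel y z) = (x <= y) && (x <= z).
Proof.
rewrite /meetdel !leLdelE; case: insubP => [u _ -> //|]; first by rewrite lexI.
rewrite negbK => /eqP yzm; exfalso.
have my : m < val y by apply: lt_m_of_le_m; rewrite -[X in X <= _]yzm leIl.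
have mz : m < val z by apply: lt_m_of_le_m; rewrite -[X in X <= _]yzm leIr.
have : ms <= m by rewrite -[X in _ <= X]yzm lexI !ms_le.
by rewrite lt_geF.
Qed.

Lemma leUxdel (x y z : Ldel) : (joindel x y <= z) = (x <= z) && (y <= z).
Proof.
rewrite /joindel !leLdelE; case: insubP => [u _ -> //|]; first by rewrite leUx.
rewrite negbK => /eqP xym /=; rewrite -leUx xym.
apply/idP/idP => [/(le_trans (ltW m_lt_ms)) //|mz].
exact/ms_le/lt_m_of_le_m.
Qed.

HB.instance Definition _ :=
  Order.POrder_MeetJoin_isLattice.Build d Ldel lexIdel leUxdel.

Lemma covers_val (x y : Ldel) : (m < val x -> ms < val x) ->
  covers x y = covers (val x) (val y).
Proof.
move=> hx; rewrite /covers ltLdelE; case: (boolP (val y < val x)) => //= yx.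
apply/forallP/forallP => between w.
  case: (eqVneq w m) => [->|wm]; last exact: (between (exist _ w wm)).
  apply/negP => /andP [ym mx].
  by have := between msdel; rewrite !ltLdelE /= (lt_trans ym m_lt_ms) hx.
by have := between (val w); rewrite !ltLdelE.
Qed.

Lemma join_irr_val (x : Ldel) : val x != ms -> ~~ (val x <= m) ->
  join_irr x -> join_irr (val x).
Proof.
move=> xms xm; rewrite /join_irr => /eqP <-; apply/eqP.
have ms_lt_x : m < val x -> ms < val x by move=> mx; rewrite lt_def xms ms_le.
rewrite -(card_imset _ val_inj); apply: eq_card => b.
rewrite inE; apply/idP/imsetP => [xb|[y]]; last by rewrite inE covers_val // => ? ->.
have bm : b != m.
  apply: contraNneq xms => bm; move: xb; rewrite bm => /andP [mx /forallP nobetween].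
  have := nobetween ms; rewrite m_lt_ms /= => ms_nlt_x.
  by have := ms_le mx; rewrite le_eqVlt (negbTE ms_nlt_x) orbF eq_sym.
by exists (exist _ b bm); rewrite // inE covers_val.
Qed.

Lemma card_upset_Ldel (x : Ldel) :
  #|upset x| = #|[set b : L | (val x <= b) && (b != m)]|.
Proof.
rewrite -(card_imset _ val_inj); apply: eq_card => b.
rewrite inE; apply/imsetP/idP => [[y]|/andP [xb bm]].
  by rewrite /upset inE leLdelE => xy ->; rewrite xy (valP y).
by exists (exist _ b bm); rewrite // /upset inE leLdelE.
Qed.

Variable j : L.
Hypothesis m_lt_j : m < j.
Hypothesis j_irr : join_irr j.

Lemma notin_upset_m : m \notin upset j.
Proof. by rewrite inE lt_geF. Qed.

Lemma card_upset_Ldel_below_j (x : Ldel) :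
  val x <= j -> (#|upset j| <= #|upset x|)%N.
Proof.
move=> xj; rewrite card_upset_Ldel; apply/subset_leq_card/subsetP => b jb.
rewrite inE (le_trans xj) //; last by move: jb; rewrite inE.
by apply: contraNneq notin_upset_m => <-.
Qed.

Lemma card_upset_Ldel_not_below_m (x : Ldel) :
  ~~ (val x <= m) -> #|upset x| = #|upset (val x)|.
Proof.
move=> xm; rewrite card_upset_Ldel; apply: eq_card => b.
rewrite !inE andb_idr // => xb.
by apply: contraNneq xm => bm; move: xb; rewrite bm.
Qed.

Lemma counterexample_Ldel : counterexample L -> counterexample Ldel.
Proof.
case=> L_gt1 up_large; have upj := up_large j j_irr.
have upj_lt : (#|upset j| < #|L|)%N.
  apply: proper_card; apply/properP; split; first exact: subset_predT.
  by exists m; rewrite ?notin_upset_m.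
split; first by rewrite card_Ldel; lia.
move=> x x_irr; rewrite card_Ldel.
have [xj|xj] := boolP (val x <= j).
  apply: leq_ltn_trans (leq_pred _) (leq_trans upj _).
  by rewrite leq_mul2l card_upset_Ldel_below_j ?orbT.
have xm : ~~ (val x <= m) by apply: contra xj => /le_trans; apply; exact: ltW.
have xms : val x != ms by apply: contra xj => /eqP ->; exact: ms_le.
rewrite (leq_ltn_trans (leq_pred _)) // card_upset_Ldel_not_below_m //.
exact/up_large/join_irr_val.
Qed.

End DeleteMeetIrreducible.

Theorem theorem2p3 (d : Order.disp_t) (L : finLatticeType d) :
  min_counterexample L ->
  ~ (exists m j : L, [/\ meet_irr m, join_irr j & m < j]).
Proof.
move=> [HL Lmin] [m [j [m_irr j_irr m_lt_j]]].
have [ms m_lt_ms ms_le] := meet_irr_upper_cover m_irr.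
have := Lmin _ _ (counterexample_Ldel m_lt_ms ms_le m_lt_j j_irr HL).
by rewrite card_Ldel; case: HL => L_gt1 _; lia.
Qed.
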